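(* Let $D$ be an oriented graph whose missing graph is a vertex-disjoint union of paths, and let $ab$, $xy$, $zt$ be missing edges of $D$. If $ab$ loses to $xy$ and $ab$ loses to $zt$, then $\{x,y\}\cap\{z,t\}\neq\emptyset$.
   Context: All digraphs are finite oriented graphs. $N^+(v)$ is the out-neighborhood; $N^{++}(v)$ is the set of vertices $w\notin N^+(v)\cup\{v\}$ with $u\to w$ for some $u\in N^+(v)$. A missing edge is a pair of distinct non-adjacent vertices; the missing graph is formed by the missing edges. For missing edges $\{x,y\},\{a,b\}$, $\{x,y\}$ loses to $\{a,b\}$ if the endpoints can be labelled so that $x\to a$, $b\notin N^+(x)\cup N^{++}(x)$, $y\to b$, $a\notin N^+(y)\cup N^{++}(y)$. *)

From mathcomp Require Import all_boot.
Set Implicit Arguments. Unset Strict Implicit. Unset Printing Implicit Defensive.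

Section Digraphs.
Variable T : finType.

Definition oriented (D : rel T) : Prop :=
  (forall v, ~~ D v v) /\ (forall u v, D u v -> ~~ D v u).

Definition missing (D : rel T) : rel T :=
  fun u v => (u != v) && ~~ D u v && ~~ D v u.

Definition Nout (D : rel T) (v : T) : {set T} := [set u | D v u].

Definition Nout2 (D : rel T) (v : T) : {set T} :=
  [set w | (w \notin Nout D v) && (w != v) && [exists u in Nout D v, D u w]].

Definition missing_union_of_paths (D : rel T) : Prop :=
  (forall v, #|[set u | missing D v u]| <= 2) /\
  (forall s : seq T, 3 <= size s -> uniq s -> ~~ cycle (missing D) s).

Definition loses_lab (D : rel T) (x y a b : T) : Prop :=
  D x a /\ b \notin Nout D x :|: Nout2 D x /\
  D y b /\ a \notin Nout D y :|: Nout2 D y.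

(* Missing edge {x,y} loses to missing edge {a,b}: for some labelling of
   the endpoints. *)
Definition loses (D : rel T) (x y a b : T) : Prop :=
  loses_lab D x y a b \/ loses_lab D y x a b \/
  loses_lab D x y b a \/ loses_lab D y x b a.

End Digraphs.

From mathcomp Require Import all_boot.

Set Implicit Arguments.
Unset Strict Implicit.
Unset Printing Implicit Defensive.

(* Label the two losses as a -> u, b -> v and a -> u', b -> v'.  An arc
   between v and u' would put u' in N^{++}(b) or v in N^{++}(a), so v u'
   is a missing edge, and likewise v' u.  Unless {u,v} and {u',v'} meet,
   u v u' v' is then a 4-cycle of the missing graph, which has none. *)

Section Digraph.
Variables (T : finType) (D : rel T).

Lemma missingC u v : missing D u v = missing D v u.
Proof. by rewrite /missing eq_sym andbAC. Qed.

Lemma mem_Nout12 p u w :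
  D p u -> D u w -> w != p -> w \in Nout D p :|: Nout2 D p.
Proof.
move=> Dpu Duw wp; rewrite in_setU; case: (boolP (w \in Nout D p)) => //= wNp.
by rewrite inE wNp wp; apply/existsP; exists u; rewrite inE Dpu.
Qed.

Lemma missing_out_neighbours p q u w :
  missing D p q -> D p u -> D q w ->
  w \notin Nout D p :|: Nout2 D p -> u \notin Nout D q :|: Nout2 D q ->
  u != w -> missing D u w.
Proof.
case/andP=> /andP[_ nDpq] nDqp Dpu Dqw wN12p uN12q uw.
have wp : w != p by apply: contraNneq nDqp => <-.
have uq : u != q by apply: contraNneq nDpq => <-.
rewrite /missing uw /=; apply/andP; split.
- by apply: contra wN12p => Duw; apply: mem_Nout12 Dpu Duw wp.
- by apply: contra uN12q => Dwu; apply: mem_Nout12 Dqw Dwu uq.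
Qed.

Lemma loses_lab_swap p q u v : loses_lab D q p u v -> loses_lab D p q v u.
Proof. by case=> Dqu [vN12q [Dpv uN12p]]. Qed.

Lemma loses_lab_of_loses a b x y :
  missing D x y -> loses D a b x y ->
  exists u v, [/\ loses_lab D a b u v, missing D u v & [set u; v] = [set x; y]].
Proof.
move=> Mxy; have Myx : missing D y x by rewrite missingC.
case=> [L|[/loses_lab_swap L|[L|/loses_lab_swap L]]].
- by exists x, y.
- by exists y, x; rewrite setUC.
- by exists y, x; rewrite setUC.
- by exists x, y.
Qed.

Lemma disjoint_loses_lab_missing_cycle a b u v u' v' :
  missing D a b -> missing D u v -> missing D u' v' ->
  loses_lab D a b u v -> loses_lab D a b u' v' ->
  [set u; v] :&: [set u'; v'] = set0 ->
  uniq [:: u; v; u'; v'] && cycle (missing D) [:: u; v; u'; v'].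
Proof.
move=> Mab Muv Mu'v' [Dau [vN12a [Dbv uN12b]]] [Dau' [v'N12a [Dbv' u'N12b]]].
move=> disj; have ne r s : r \in [set u; v] -> s \in [set u'; v'] -> r != s.
  move=> r_uv s_u'v'; apply/eqP => rs.
  by have := in_set0 r; rewrite -disj in_setI r_uv rs s_u'v'.
have Mba : missing D b a by rewrite missingC.
have Mvu' : missing D v u'.
  apply: missing_out_neighbours Mba Dbv Dau' u'N12b vN12a _.
  by rewrite ne ?set21 ?set22.
have Mv'u : missing D v' u.
  apply: missing_out_neighbours Mba Dbv' Dau uN12b v'N12a _.
  by rewrite eq_sym ne ?set21 ?set22.
have [uv u'v'] : u != v /\ u' != v'.
  by case/andP: Muv => /andP[]; case/andP: Mu'v' => /andP[].
by rewrite /= !inE !negb_or uv u'v' !ne ?set21 ?set22 //= Muv Mvu' Mu'v' Mv'u.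
Qed.

End Digraph.

Theorem lemma4p1 (T : finType) (D : rel T) (a b x y z t : T) :
  oriented D ->
  missing_union_of_paths D ->
  missing D a b -> missing D x y -> missing D z t ->
  loses D a b x y -> loses D a b z t ->
  [set x; y] :&: [set z; t] != set0.
Proof.
move=> _ [_ acyclic] Mab /loses_lab_of_loses Lxy /loses_lab_of_loses Lzt.
move=> {}/Lxy [u [v [Luv Muv <-]]] {}/Lzt [u' [v' [Lu'v' Mu'v' <-]]].
apply/eqP => /(disjoint_loses_lab_missing_cycle Mab Muv Mu'v' Luv Lu'v').
case/andP=> uniq_s cyc.
by move: (acyclic [:: u; v; u'; v'] isT uniq_s); rewrite cyc.
Qed.
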